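(* Let $E_1,E_2,E_3,H$ be logically independent events with $H\ne\emptyset$, and let $\mathscr C_i=E_i|H$ ($i=1,2,3$), $\mathscr C_{ij}=(E_i|H)\wedge(E_j|H)$ ($1\le i<j\le3$), $\mathscr C_{123}=(E_1|H)\wedge(E_2|H)\wedge(E_3|H)$. Then an assessment $(x_1,x_2,x_3,x_{12},x_{13},x_{23},x_{123})$ on $\{\mathscr C_1,\mathscr C_2,\mathscr C_3,\mathscr C_{12},\mathscr C_{13},\mathscr C_{23},\mathscr C_{123}\}$ is coherent if and only if $(x_1,x_2,x_3)\in[0,1]^3$; $\max\{x_1+x_2-1,x_{13}+x_{23}-x_3,0\}\le x_{12}\le\min\{x_1,x_2\}$; $\max\{x_1+x_3-1,x_{12}+x_{23}-x_2,0\}\le x_{13}\le\min\{x_1,x_3\}$; $\max\{x_2+x_3-1,x_{12}+x_{13}-x_1,0\}\le x_{23}\le\min\{x_2,x_3\}$; $1-x_1-x_2-x_3+x_{12}+x_{13}+x_{23}\ge0$; $x_{123}\ge\max\{0,x_{12}+x_{13}-x_1,x_{12}+x_{23}-x_2,x_{13}+x_{23}-x_3\}$; $x_{123}\le\min\{x_{12},x_{13},x_{23},1-x_1-x_2-x_3+x_{12}+x_{13}+x_{23}\}$.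
   Context: Events are identified with their indicators; $\bar E$ is the negation of $E$. For $H\ne\emptyset$ the conditional event $E|H$ is true if $EH$ is true, false if $\bar EH$ is true, void if $\bar H$ is true; with $P(E|H)=x$ it is identified with the random quantity $EH+x\bar H$, and a conditional random quantity $X|H$ with prevision $\mu$ with $XH+\mu\bar H$. Coherence (de Finetti): an assessment $(\mu_1,\dots,\mu_m)$ on $\{X_1|H_1,\dots,X_m|H_m\}$ is coherent iff for all real stakes $s_i$ the gain $G=\sum_is_iH_i(X_i-\mu_i)$, restricted to $H_1\vee\dots\vee H_m$, satisfies $\min G\le0\le\max G$. Logical independence: all conjunctions of the listed events or their negations are nonempty. Conjunction of conditional events $E_i|H_i$, $i\in\{1,\dots,n\}$: given prevision values $x_S$ for the sub-conjunctions $\mathscr C_S=\bigwedge_{i\in S}(E_i|H_i)$, $\emptyset\ne S\subsetneq\{1,\dots,n\}$ (with $x_{\{i\}}=P(E_i|H_i)$), $\mathscr C_{1\cdots n}$ equals $1$ if all $E_iH_i$ are true, $0$ if some $\bar E_iH_i$ is true, $x_S$ if $(\bigwedge_{i\in S}\bar H_i)(\bigwedge_{i\notin S}E_iH_i)$ is true, and its own prevision $x_{1\cdots n}$ if all $H_i$ are false. Here all $H_i=H$, $x_i=\mathbb P(\mathscr C_i)$, $x_{ij}=\mathbb P(\mathscr C_{ij})$, $x_{123}=\mathbb P(\mathscr C_{123})$. *)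

From HB Require Import structures.
From mathcomp Require Import all_boot all_order all_algebra.
From mathcomp Require Import reals.
Set Implicit Arguments. Unset Strict Implicit. Unset Printing Implicit Defensive.
Import Order.TTheory GRing.Theory Num.Theory.
Local Open Scope ring_scope.

Section Defs.
Variables (R : realType) (T : Type).

(* Events are boolean predicates on a sample space T (identified with their
   indicators, b%:R). *)

(* Conditional event E|H with P(E|H) = x, as the random quantity EH + x(~H). *)
Definition cond_event (E H : T -> bool) (x : R) (w : T) : R :=
  if H w then (E w)%:R else x.

Definition conj2 (E1 E2 H : T -> bool) (x12 : R) (w : T) : R :=
  if H w then (E1 w && E2 w)%:R else x12.

(* Conjunction (E1|H) /\ (E2|H) /\ (E3|H) with prevision x123: 1 if E1E2E3H,
   0 if some ~Ei H, x123 if ~H (the cases x_S with S a proper nonempty subset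
   cannot occur since all conditioning events equal H). *)
Definition conj3 (E1 E2 E3 H : T -> bool) (x123 : R) (w : T) : R :=
  if H w then [&& E1 w, E2 w & E3 w]%:R else x123.

(* de Finetti coherence of the assessment mu on the family of conditional
   random quantities X_i | H_i (i < m): for all real stakes s, the gain
   G = sum_i s_i H_i (X_i - mu_i), restricted to H_1 \/ ... \/ H_m,
   satisfies min G <= 0 <= max G (i.e. G takes a value <= 0 and a value
   >= 0 on H_1 \/ ... \/ H_m). *)
Definition gain m (X : 'I_m -> T -> R) (Hc : 'I_m -> T -> bool)
  (mu : 'I_m -> R) (s : 'I_m -> R) (w : T) : R :=
  \sum_(i < m) s i * ((Hc i w)%:R * (X i w - mu i)).

Definition coherent m (X : 'I_m -> T -> R) (Hc : 'I_m -> T -> bool)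
  (mu : 'I_m -> R) : Prop :=
  forall s : 'I_m -> R,
    (exists2 w, [exists i, Hc i w] & gain X Hc mu s w <= 0) /\
    (exists2 w, [exists i, Hc i w] & 0 <= gain X Hc mu s w).

End Defs.

Definition fam7 (A : Type) (d a1 a2 a3 a4 a5 a6 a7 : A) (i : 'I_7) : A :=
  nth d [:: a1; a2; a3; a4; a5; a6; a7] i.

From HB Require Import structures.
From mathcomp Require Import all_boot all_order all_algebra.
From mathcomp Require Import reals ring lra.
Set Implicit Arguments. Unset Strict Implicit. Unset Printing Implicit Defensive.
Import Order.TTheory GRing.Theory Num.Theory.
Local Open Scope ring_scope.

(* On H, the seven random quantities C_1, C_2, C_3, C_12, C_13, C_23, C_123
   depend only on the "atom" (E1, E2, E3) in {0,1}^3, and take the value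
   v(b) = (b1, b2, b3, b1b2, b1b3, b2b3, b1b2b3) on atom b.  Hence the gain
   of any bet is an affine function of the atom, and by logical independence
   every atom occurs inside H.  Coherence therefore says: for every stake s,
   the affine function b |-> sum_i s_i (v(b)_i - x_i) has a nonpositive and a
   nonnegative value on {0,1}^3.

   Moebius inversion attaches to x a weight p_b(x) for each atom (e.g.
   p_111 = x123, p_110 = x12 - x123, p_000 = 1 - x1 - x2 - x3 + x12 + x13
   + x23 - x123) such that sum_b p_b = 1 and sum_b p_b v(b) = x.  The
   indicator of atom b is itself the gain of a bet, so coherence forces
   p_b >= 0; conversely if all p_b >= 0 then every gain has p-mean zero and
   takes both signs.  Thus coherence is equivalent to the nonnegativity of
   the eight atom weights, which unfolds to the inequalities of the theorem. *)

Lemma mean_zero_has_le0 (R : realDomainType) (I : finType) (p g : I -> R) :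
  (forall i, 0 <= p i) -> \sum_i p i = 1 -> \sum_i p i * g i = 0 ->
  exists i, g i <= 0.
Proof.
move=> p_ge0 p_sum1 pg_sum0.
case: (pickP (fun i => g i <= 0)) => [i gi_le0 | g_nle0]; first by exists i.
have g_gt0 i : 0 < g i by rewrite ltNge g_nle0.
case: (pickP (fun j => 0 < p j)) => [j pj_gt0 | p_ngt0].
  have : 0 < \sum_i p i * g i.
    rewrite (bigD1 j) //= ltr_pwDl ?mulr_gt0 ?sumr_ge0 // => i _.
    exact: mulr_ge0 (p_ge0 i) (ltW (g_gt0 i)).
  by rewrite pg_sum0 ltxx.
have p0 i : p i = 0 by apply/eqP; rewrite eq_le p_ge0 andbT leNgt p_ngt0.
by move: p_sum1; rewrite big1 // => /eqP; rewrite eq_sym oner_eq0.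
Qed.

Lemma mean_zero_has_ge0 (R : realDomainType) (I : finType) (p g : I -> R) :
  (forall i, 0 <= p i) -> \sum_i p i = 1 -> \sum_i p i * g i = 0 ->
  exists i, 0 <= g i.
Proof.
move=> p_ge0 p_sum1 pg_sum0.
have [|i] := @mean_zero_has_le0 R I p (fun i => - g i) p_ge0 p_sum1.
  by under eq_bigr do rewrite mulrN; rewrite sumrN pg_sum0 oppr0.
by rewrite oppr_le0; exists i.
Qed.

Definition atom := (bool * bool * bool)%type.

Lemma sum_atom (R : zmodType) (F : atom -> R) : \sum_b F b =
  F (true, true, true) + F (true, true, false) + F (true, false, true)
  + F (true, false, false) + F (false, true, true) + F (false, true, false)
  + F (false, false, true) + F (false, false, false).
Proof.
have pairE (I J : finType) (G : I * J -> R) : \sum_p G p = \sum_i \sum_j G (i, j).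
  by rewrite pair_bigA; apply: eq_bigr => -[].
by rewrite !pairE !big_bool /= !addrA.
Qed.

Section AtomWeights.
Variable R : realFieldType.

Definition vertex (b : atom) : 'I_7 -> R :=
  let: (b1, b2, b3) := b in
  fam7 0 b1%:R b2%:R b3%:R (b1 && b2)%:R (b1 && b3)%:R (b2 && b3)%:R
    [&& b1, b2 & b3]%:R.

Definition atom_gain (x s : 'I_7 -> R) (b : atom) : R :=
  \sum_(i < 7) s i * (vertex b i - x i).

(* Coefficients of the factor of the atom indicator in coordinate i. *)
Definition sgn (b : bool) : R := if b then 1 else -1.
Definition nb (b : bool) : R := (~~ b)%:R.

(* Expanding the indicator of atom b, prod_i (sgn b_i * e_i + nb b_i), as a
   constant plus a combination of e_i, e_i e_j and e_1 e_2 e_3. *)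
Definition atom_const (b : atom) : R :=
  let: (b1, b2, b3) := b in nb b1 * nb b2 * nb b3.

Definition atom_stake (b : atom) : 'I_7 -> R :=
  let: (b1, b2, b3) := b in
  fam7 0 (sgn b1 * nb b2 * nb b3) (nb b1 * sgn b2 * nb b3)
    (nb b1 * nb b2 * sgn b3) (sgn b1 * sgn b2 * nb b3)
    (sgn b1 * nb b2 * sgn b3) (nb b1 * sgn b2 * sgn b3)
    (sgn b1 * sgn b2 * sgn b3).

(* The Moebius weight of atom b: the prevision of its indicator under x. *)
Definition atom_weight (x : 'I_7 -> R) (b : atom) : R :=
  atom_const b + \sum_i atom_stake b i * x i.

Lemma indicator_factor (b c : bool) : sgn b * c%:R + nb b = (c == b)%:R.
Proof. by case: b; case: c; rewrite /sgn /nb /=; ring. Qed.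

Lemma atom_indicator (b b' : atom) :
  atom_const b + \sum_i atom_stake b i * vertex b' i = (b' == b)%:R.
Proof.
case: b => [[b1 b2] b3]; case: b' => [[c1 c2] c3].
rewrite !xpair_eqE -!mulnb !natrM -!indicator_factor.
rewrite !big_ord_recl big_ord0 /= /fam7 /=.
by case: c1; case: c2; case: c3 => /=; ring.
Qed.

Lemma atom_gain_stake (x : 'I_7 -> R) (b b' : atom) :
  atom_gain x (atom_stake b) b' = (b' == b)%:R - atom_weight x b.
Proof.
rewrite -atom_indicator /atom_gain /atom_weight.
under eq_bigr do rewrite mulrBr.
by rewrite sumrB; ring.
Qed.

Section Barycenter.
Variables x1 x2 x3 x12 x13 x23 x123 : R.
Local Notation x := (fam7 0 x1 x2 x3 x12 x13 x23 x123).

Lemma atom_weight_sum1 : \sum_b atom_weight x b = 1.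
Proof.
by rewrite sum_atom /atom_weight !big_ord_recl big_ord0 /= /fam7 /sgn /nb /=; ring.
Qed.

Lemma atom_weight_mean (i : 'I_7) : \sum_b atom_weight x b * vertex b i = x i.
Proof.
rewrite sum_atom /atom_weight !big_ord_recl big_ord0.
by case: i => [[|[|[|[|[|[|[|//]]]]]]] ?]; rewrite /= /fam7 /sgn /nb /=; ring.
Qed.

Lemma atom_gain_mean0 (s : 'I_7 -> R) :
  \sum_b atom_weight x b * atom_gain x s b = 0.
Proof.
rewrite /atom_gain; under eq_bigr do rewrite big_distrr /=.
rewrite exchange_big big1 // => i _.
under eq_bigr do rewrite mulrCA mulrBr.
rewrite -mulr_sumr sumrB -mulr_suml atom_weight_mean atom_weight_sum1.
by rewrite mul1r subrr mulr0.
Qed.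

Lemma atom_coherent_iff :
  (forall s, (exists b, atom_gain x s b <= 0) /\ (exists b, 0 <= atom_gain x s b))
  <-> (forall b, 0 <= atom_weight x b).
Proof.
split=> [coh b | w_ge0 s].
  have [[b' +] _] := coh (atom_stake b).
  by rewrite atom_gain_stake subr_le0; apply: le_trans.
split; [apply: mean_zero_has_le0 | apply: mean_zero_has_ge0];
  by [ | exact: atom_weight_sum1 | exact: atom_gain_mean0].
Qed.

End Barycenter.
End AtomWeights.
Arguments sgn {R} b.
Arguments nb {R} b.

Lemma atom_weights_ge0_iff (R : realFieldType) (x1 x2 x3 x12 x13 x23 x123 : R) :
  (forall b, 0 <= atom_weight (fam7 0 x1 x2 x3 x12 x13 x23 x123) b) <->
  ((0 <= x1 <= 1) /\ (0 <= x2 <= 1) /\ (0 <= x3 <= 1) /\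
   (Num.max (Num.max (x1 + x2 - 1) (x13 + x23 - x3)) 0 <= x12 <= Num.min x1 x2) /\
   (Num.max (Num.max (x1 + x3 - 1) (x12 + x23 - x2)) 0 <= x13 <= Num.min x1 x3) /\
   (Num.max (Num.max (x2 + x3 - 1) (x12 + x13 - x1)) 0 <= x23 <= Num.min x2 x3) /\
   (0 <= 1 - x1 - x2 - x3 + x12 + x13 + x23) /\
   (Num.max (Num.max (Num.max 0 (x12 + x13 - x1)) (x12 + x23 - x2)) (x13 + x23 - x3)
      <= x123) /\
   (x123 <= Num.min (Num.min (Num.min x12 x13) x23)
               (1 - x1 - x2 - x3 + x12 + x13 + x23))).
Proof.
have weightE b : atom_weight (fam7 0 x1 x2 x3 x12 x13 x23 x123) b =
  let: (b1, b2, b3) := b in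
  nb b1 * nb b2 * nb b3 + sgn b1 * nb b2 * nb b3 * x1
  + nb b1 * sgn b2 * nb b3 * x2 + nb b1 * nb b2 * sgn b3 * x3
  + sgn b1 * sgn b2 * nb b3 * x12 + sgn b1 * nb b2 * sgn b3 * x13
  + nb b1 * sgn b2 * sgn b3 * x23 + sgn b1 * sgn b2 * sgn b3 * x123.
  case: b => [[b1 b2] b3].
  by rewrite /atom_weight !big_ord_recl big_ord0 /= /fam7 /=; ring.
rewrite !ge_max !le_min; split=> [w_ge0 | conds [[b1 b2] b3]].
  have := w_ge0 (true, true, true); have := w_ge0 (true, true, false).
  have := w_ge0 (true, false, true); have := w_ge0 (true, false, false).
  have := w_ge0 (false, true, true); have := w_ge0 (false, true, false).
  have := w_ge0 (false, false, true); have := w_ge0 (false, false, false).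
  rewrite !weightE /sgn /nb /= => *.
  by repeat split; repeat (apply/andP; split); lra.
(* the two bounds on x123 alone already make every weight nonnegative *)
move: conds => [_ [_ [_ [_ [_ [_ [_ [lo hi]]]]]]]].
move: lo hi => /andP[/andP[/andP[? ?] ?] ?] /andP[/andP[/andP[? ?] ?] ?].
by rewrite weightE /sgn /nb; case: b1; case: b2; case: b3 => /=; lra.
Qed.

Section Events.
Variables (R : realType) (T : Type) (E1 E2 E3 H : T -> bool).
Variables x1 x2 x3 x12 x13 x23 x123 : R.

Local Notation x := (fam7 0 x1 x2 x3 x12 x13 x23 x123).
Local Notation family := (fam7 (fun _ : T => 0 : R)
  (cond_event E1 H x1) (cond_event E2 H x2) (cond_event E3 H x3)
  (conj2 E1 E2 H x12) (conj2 E1 E3 H x13) (conj2 E2 E3 H x23)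
  (conj3 E1 E2 E3 H x123)).

Definition atom_of (w : T) : atom := (E1 w, E2 w, E3 w).

Lemma gain_atom (s : 'I_7 -> R) (w : T) :
  H w -> gain family (fun _ => H) x s w = atom_gain x s (atom_of w).
Proof.
move=> Hw; apply: eq_bigr => i _; rewrite Hw mul1r.
by case: i => [[|[|[|[|[|[|[|//]]]]]]] ?];
  rewrite /= /fam7 /= /cond_event /conj2 /conj3 Hw.
Qed.

(* By logical independence every atom occurs inside H, so coherence reduces
   to a condition on the affine gains over the atoms. *)
Lemma coherent_atomsE
    (Hindep : forall b1 b2 b3 b4 : bool,
        exists w : T, [/\ E1 w = b1, E2 w = b2, E3 w = b3 & H w = b4]) :
  coherent family (fun _ => H) x <->
  (forall s, (exists b, atom_gain x s b <= 0) /\ (exists b, 0 <= atom_gain x s b)).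
Proof.
have realized (b : atom) : exists2 w, H w & atom_of w = b.
  case: b => [[b1 b2] b3]; have [w [e1 e2 e3 Hw]] := Hindep b1 b2 b3 true.
  by exists w; rewrite // /atom_of e1 e2 e3.
have inH w : H w -> [exists i : 'I_7, H w] by move=> Hw; apply/existsP; exists ord0.
split=> [coh s | atoms s].
  have [[w /existsP[_ Hw] le0] [w' /existsP[_ Hw'] ge0]] := coh s.
  by split; [exists (atom_of w) | exists (atom_of w')]; rewrite -gain_atom.
have [[b le0] [b' ge0]] := atoms s.
have [w Hw wb] := realized b; have [w' Hw' wb'] := realized b'.
by split; [exists w | exists w']; rewrite ?inH // gain_atom ?wb ?wb'.
Qed.

End Events.

Theorem theorem21 (R : realType) (T : Type) (E1 E2 E3 H : T -> bool)
  (Hindep : forall b1 b2 b3 b4 : bool,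
      exists w : T, [/\ E1 w = b1, E2 w = b2, E3 w = b3 & H w = b4])
  (Hne : exists w : T, H w)
  (x1 x2 x3 x12 x13 x23 x123 : R) :
  coherent
    (fam7 (fun _ : T => 0 : R)
       (cond_event E1 H x1) (cond_event E2 H x2) (cond_event E3 H x3)
       (conj2 E1 E2 H x12) (conj2 E1 E3 H x13) (conj2 E2 E3 H x23)
       (conj3 E1 E2 E3 H x123))
    (fun _ => H)
    (fam7 0 x1 x2 x3 x12 x13 x23 x123)
  <->
  ((0 <= x1 <= 1) /\ (0 <= x2 <= 1) /\ (0 <= x3 <= 1) /\
   (Num.max (Num.max (x1 + x2 - 1) (x13 + x23 - x3)) 0 <= x12 <= Num.min x1 x2) /\
   (Num.max (Num.max (x1 + x3 - 1) (x12 + x23 - x2)) 0 <= x13 <= Num.min x1 x3) /\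
   (Num.max (Num.max (x2 + x3 - 1) (x12 + x13 - x1)) 0 <= x23 <= Num.min x2 x3) /\
   (0 <= 1 - x1 - x2 - x3 + x12 + x13 + x23) /\
   (Num.max (Num.max (Num.max 0 (x12 + x13 - x1)) (x12 + x23 - x2)) (x13 + x23 - x3)
      <= x123) /\
   (x123 <= Num.min (Num.min (Num.min x12 x13) x23)
               (1 - x1 - x2 - x3 + x12 + x13 + x23))).
Proof.
rewrite coherent_atomsE //.
rewrite -atom_weights_ge0_iff.
exact: atom_coherent_iff.
Qed.
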